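(* Consider $\dot x=f(x,u)$ with $x\in\mathbb{R}^n$, $f:\mathbb{R}^n\times\mathbb{R}^m\to\mathbb{R}^n$ continuous, $f(0,0)=0$, and suppose $V:\mathbb{R}^n\to\mathbb{R}_{\ge0}$ is a FxT-ISS Lyapunov function for this system. Let $\sigma\in\mathcal{K}_\infty$ have the form $\sigma(s)=\sum_{i=1}^nc_is^{r_i}$ with $1\le r_1<r_2<\dots<r_n$ and real $c_i\neq0$, and suppose $\sigma'(s)>0$ for all $s>0$. Then $\tilde V(x)=\sigma(V(x))$ is a FxT-ISS Lyapunov function for the system.
   Context: $\mathcal{K}_\infty$: continuous strictly increasing unbounded $\alpha:\mathbb{R}_{\ge0}\to\mathbb{R}_{\ge0}$ with $\alpha(0)=0$. $\mathcal{K}_{\mathrm{FxT}}$: functions $c_1s^{p_1}+c_2s^{p_2}$ with $c_1,c_2>0$, $p_1\in(0,1)$, $p_2>1$. A locally Lipschitz $V:\mathbb{R}^n\to\mathbb{R}_{\ge0}$ is a FxT-ISS Lyapunov function for $\dot x=f(x,u)$ if there exist $\underline\alpha,\overline\alpha,\chi\in\mathcal{K}_\infty$ and $\Psi\in\mathcal{K}_{\mathrm{FxT}}$ such that $\underline\alpha(|x|)\le V(x)\le\overline\alpha(|x|)$ for all $x$, and for all $x\in\mathbb{R}^n$, $u\in\mathbb{R}^m$: $V(x)\ge\chi(|u|)\implies DV(x;f(x,u))\le-\Psi(V(x))$, where $DV(x;v)=\limsup_{h\to0^+}\frac{V(x+hv)-V(x)}{h}$. *)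

From HB Require Import structures.
From mathcomp Require Import all_boot all_order all_algebra.
From mathcomp Require Import all_classical all_reals all_analysis.
Set Implicit Arguments. Unset Strict Implicit. Unset Printing Implicit Defensive.
Import Order.TTheory GRing.Theory Num.Theory.
Import numFieldNormedType.Exports.
Local Open Scope classical_set_scope.
Local Open Scope ring_scope.

Definition enorm {R : realType} {n : nat} (x : 'rV[R]_n) : R :=
  Num.sqrt (\sum_(i < n) x ord0 i ^+ 2).

Definition Kinf {R : realType} (a : R -> R) : Prop :=
  [/\ a 0 = 0,
      {within `[0, +oo[, continuous a},
      (forall s t : R, 0 <= s -> s < t -> a s < a t)
    & (forall M : R, exists s : R, 0 <= s /\ M < a s)].

Definition KFxT {R : realType} (Psi : R -> R) : Prop :=
  exists c1 c2 p1 p2 : R,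
    [/\ 0 < c1, 0 < c2, 0 < p1 < 1, 1 < p2
      & forall s : R, Psi s = c1 * s `^ p1 + c2 * s `^ p2].

Definition locally_lipschitz {R : realType} {n : nat} (V : 'rV[R]_n -> R) : Prop :=
  forall x : 'rV[R]_n, exists2 d : R, 0 < d &
    exists L : R, forall y z : 'rV[R]_n,
      enorm (y - x) < d -> enorm (z - x) < d ->
      `|V y - V z| <= L * enorm (y - z).

Definition DV {R : realType} {n : nat} (V : 'rV[R]_n -> R) (x v : 'rV[R]_n)
  : \bar R :=
  limf_esup (fun h : R => ((V (x + h *: v) - V x) / h)%:E) (0%R^'+).

Definition FxT_ISS_Lyapunov {R : realType} {n m : nat}
  (f : 'rV[R]_n -> 'rV[R]_m -> 'rV[R]_n) (V : 'rV[R]_n -> R) : Prop :=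
  locally_lipschitz V /\ (forall x, 0 <= V x) /\
  exists (al au chi Psi : R -> R),
    [/\ Kinf al, Kinf au, Kinf chi, KFxT Psi
      & (forall x, al (enorm x) <= V x /\ V x <= au (enorm x))] /\
      (forall (x : 'rV[R]_n) (u : 'rV[R]_m),
          chi (enorm u) <= V x -> (DV V x (f x u) <= (- Psi (V x))%:E)%E).

(* sigma is C^1 on ]0, +oo[ with sigma 0 = 0, and sigma' > 0 forces the extreme
   coefficients c_1 r_1 and c_N r_N to be positive: they are the limits of
   sigma'(s) / s^(r_1 - 1) at 0^+ and of sigma'(s) / s^(r_N - 1) at +oo.
   Together with compactness in between, sigma'(s) >= m s^(r_1 - 1) on ]0, 1]
   and sigma'(s) >= m s^(r_N - 1) on [1, +oo[, while sigma(s) <= C s^(r_1) on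
   [0, 1] and sigma(s) <= C s^(r_N) on [1, +oo[.  For
   Psi(s) = a_1 s^(p_1) + a_2 s^(p_2) the exponents
   q_1 = (r_1 - 1 + p_1) / r_1 < 1 and q_2 = (r_N - 1 + p_2) / r_N > 1 then give
   sigma'(s) Psi(s) >= b (sigma(s)^(q_1) + sigma(s)^(q_2)), a K_FxT function of
   sigma(s).  Since V is locally Lipschitz, its difference quotients along a ray
   are bounded, which yields the chain rule D(sigma o V)(x; v) <= d DV(x; v)
   with d = sigma'(V x) when V x > 0, and with d = C when V x = 0 (where
   DV(x; v) <= -Psi 0 = 0 and sigma(z) <= C z near 0).  Composition with sigma
   preserves K_oo and local Lipschitz continuity. *)

From HB Require Import structures.
From mathcomp Require Import all_boot all_order all_algebra.
From mathcomp Require Import all_classical all_reals all_analysis.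
From mathcomp Require Import lra.
Set Implicit Arguments. Unset Strict Implicit. Unset Printing Implicit Defensive.
Import Order.TTheory GRing.Theory Num.Theory.
Import numFieldNormedType.Exports.
Local Open Scope classical_set_scope.
Local Open Scope ring_scope.

Lemma limf_esup_leP {R : realType} (F : set_system R) {FF : Filter F}
    (g : R -> R) (y : R) :
  (limf_esup (fun h => (g h)%:E) F <= y%:E)%E <->
  (forall e, 0 < e -> \forall h \near F, g h <= y + e).
Proof.
split=> [gy e e0|gy].
  have : (limf_esup (fun h => (g h)%:E) F < (y + e)%:E)%E.
    by apply: le_lt_trans gy _; rewrite lte_fin ltrDl.
  rewrite limf_esupE => /ereal_inf_lt [_ [A FA <-]] supA.
  apply: filterS FA => h Ah; apply/ltW; rewrite -lte_fin.
  by apply: le_lt_trans supA; apply: ereal_sup_ubound; exists h.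
apply/lee_addgt0Pr => e e0; rewrite limf_esupE; apply: ge_ereal_inf.
exists (ereal_sup [set (g h)%:E | h in [set h | g h <= y + e]]).
  by exists [set h | g h <= y + e] => //; exact: gy.
by apply: ge_ereal_sup => _ [h /= gh <-]; rewrite -EFinD lee_fin.
Qed.

Section Kinf.
Context {R : realType}.
Implicit Types (a b : R -> R) (s t : R).

Lemma Kinf_gt0 a s : Kinf a -> 0 < s -> 0 < a s.
Proof. by case=> a0 _ incr _ s0; rewrite -a0; apply: incr. Qed.

Lemma Kinf_ge0 a s : Kinf a -> 0 <= s -> 0 <= a s.
Proof.
move=> Ka; rewrite le_eqVlt => /predU1P[<-|s0]; first by case: Ka => ->.
exact/ltW/Kinf_gt0.
Qed.

Lemma Kinf_ler a s t : Kinf a -> 0 <= s -> 0 <= t -> (a s <= a t) = (s <= t).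
Proof.
case=> _ _ incr _ s0 t0; apply/idP/idP => [ast|].
  by rewrite leNgt; apply/negP => /(incr _ _ t0); rewrite ltNge ast.
by rewrite le_eqVlt => /predU1P[->//|/(incr _ _ s0)/ltW].
Qed.

Lemma Kinf_comp a b : Kinf a -> Kinf b -> Kinf (a \o b).
Proof.
move=> Ka Kb; have [a0 ac incra unba] := Ka; have [b0 bc incrb unbb] := Kb.
have [ca ra] := (continuous_within_itvcyP 0 a).1 ac.
have [cb rb] := (continuous_within_itvcyP 0 b).1 bc.
split=> /=.
- by rewrite b0.
- apply/continuous_within_itvcyP; split=> [s|].
    rewrite in_itv/= andbT => s0; apply: continuous_comp.
      by apply: cb; rewrite in_itv/= s0.
    by apply: ca; rewrite in_itv/= Kinf_gt0.
  apply/cvgrPdist_lt => e e0; move/cvgrPdist_lt: ra => /(_ e e0).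
  rewrite near_withinE => /nbhs_ballP [d /= d0 ad].
  near=> s; rewrite b0; apply: ad; last first.
    by apply: (Kinf_gt0 Kb); near: s; exact: nbhs_right_gt.
  by rewrite /ball /= -b0; near: s; move/cvgrPdist_lt: rb; apply.
- by move=> s t s0 st; apply: incra; [exact: Kinf_ge0|exact: incrb].
- move=> M; have [t [t0 Mt]] := unba M; have [s [s0 ts]] := unbb t.
  by exists s; split => //; apply: lt_trans Mt _; exact: incra.
Unshelve. all: by end_near. Qed.

End Kinf.

Section enorm.
Context {R : realType} {n : nat}.

Lemma enorm_ge0 (x : 'rV[R]_n) : 0 <= enorm x.
Proof. exact: sqrtr_ge0. Qed.

Lemma enormZ (h : R) (v : 'rV[R]_n) : enorm (h *: v) = `|h| * enorm v.
Proof.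
rewrite /enorm; under eq_bigr do rewrite mxE exprMn.
by rewrite -mulr_sumr sqrtrM ?sqr_ge0// sqrtr_sqr.
Qed.

Lemma enorm0 : enorm (0 : 'rV[R]_n) = 0.
Proof. by rewrite -(scale0r 0) enormZ normr0 mul0r. Qed.

End enorm.

Lemma lipschitz_of_derive_bound {R : realType} (g dg : R -> R) (K L : R) :
  {within `[0, +oo[, continuous g} ->
  (forall s : R, 0 < s -> is_derive s 1 g (dg s)) ->
  (forall s : R, 0 < s <= K -> `|dg s| <= L) ->
  forall a b, 0 <= a <= K -> 0 <= b <= K -> `|g a - g b| <= L * `|a - b|.
Proof.
move=> gc gd dgL.
suff lt_case a b : 0 <= a -> a < b -> b <= K -> `|g b - g a| <= L * `|b - a|.
  move=> a b /andP[a0 aK] /andP[b0 bK].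
  have [ab|ba|->] := ltgtP a b; last by rewrite !subrr normr0 mulr0.
  - by rewrite distrC (distrC a); exact: lt_case.
  - exact: lt_case.
move=> a0 ab bK.
have sub : `[a, b] `<=` `[0, +oo[.
  by move=> x /=; rewrite !in_itv/= andbT => /andP[/(le_trans a0)].
have gd' x : x \in `]a, b[ -> is_derive x 1 g (dg x).
  by rewrite in_itv/= => /andP[ax _]; exact: gd (le_lt_trans a0 ax).
have [x /[!in_itv]/= /andP[ax xb] ->] :=
  MVT ab gd' (continuous_subspaceW sub gc).
rewrite normrM ler_wpM2r// dgL// (le_lt_trans a0 ax)/=.
exact: le_trans (ltW xb) bK.
Qed.

Lemma cvg_sum_single {R : realType} (F : set_system R) {FF : Filter F} (N : nat)
    (g : 'I_N -> R -> R) (j : 'I_N) (l : R) :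
  g j x @[x --> F] --> l -> (forall i, i != j -> g i x @[x --> F] --> 0) ->
  \sum_(i < N) g i x @[x --> F] --> l.
Proof.
move=> gj gi.
have := @cvg_big R 'I_N +%R 0 predT add_continuous R F (index_enum 'I_N) g
  (fun i => if i == j then l else 0) FF.
rewrite -big_mkcond/= big_pred1_eq; apply=> i _.
by case: eqVneq => [->|/gi].
Qed.

Lemma powR_cvgy0 {R : realType} (e : R) : e < 0 -> x `^ e @[x --> +oo] --> 0.
Proof.
move=> e0; apply/cvgrPdist_lt => eps eps0.
set M := eps^-1 `^ (- e)^-1.
have M0 : 0 <= M by exact: powR_ge0.
have Me : M `^ (- e) = eps^-1.
  by rewrite /M -powRrM mulVf ?oppr_eq0 ?lt_eqF// powRr1// invr_ge0 ltW.
near=> x.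
have Mx : M < x by near: x; apply: nbhs_pinfty_gt; exact: num_real.
have x0 : 0 < x by exact: le_lt_trans M0 Mx.
rewrite sub0r normrN ger0_norm ?powR_ge0// -[e]opprK powRN.
rewrite invf_plt ?posrE ?powR_gt0// -Me.
by apply: gt0_ltr_powR; rewrite ?oppr_gt0// nnegrE ltW.
Unshelve. all: by end_near. Qed.

Section powR_bounds.
Context {R : realType}.
Implicit Types u s C rho q : R.

Lemma powR_le_mul_powR u C s rho q : 0 <= u <= C * s `^ rho -> 0 <= C -> 0 <= q ->
  u `^ q <= C `^ q * s `^ (rho * q).
Proof.
move=> /andP[u0 uC] C0 q0; rewrite powRrM -powRM ?powR_ge0//.
by apply: ge0_ler_powR; rewrite ?nnegrE ?mulr_ge0 ?powR_ge0.
Qed.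

Lemma powR_sum_le_regime u d s C m a rho p q1 q2 :
  0 <= u <= C * s `^ rho -> 0 < C -> 0 < s -> 0 <= q1 -> 0 <= q2 ->
  s `^ (rho * q1) <= s `^ (rho - 1 + p) -> s `^ (rho * q2) <= s `^ (rho - 1 + p) ->
  0 <= m -> 0 <= a -> m * s `^ (rho - 1) <= d ->
  m * a / (C `^ q1 + C `^ q2) * (u `^ q1 + u `^ q2) <= d * (a * s `^ p).
Proof.
move=> uC C0 s0 q10 q20 sq1 sq2 m0 a0 md.
have K0 : 0 < C `^ q1 + C `^ q2 by rewrite addr_gt0 ?powR_gt0.
have uq_le q : 0 <= q -> s `^ (rho * q) <= s `^ (rho - 1 + p) ->
    u `^ q <= C `^ q * s `^ (rho - 1 + p).
  move=> q0 sq; apply: le_trans (powR_le_mul_powR uC (ltW C0) q0) _.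
  by rewrite ler_wpM2l ?powR_ge0.
apply: le_trans (_ : m * a * s `^ (rho - 1 + p) <= _).
  rewrite -mulrA ler_wpM2l ?mulr_ge0// mulrC ler_pdivrMr// mulrC mulrDl.
  by rewrite lerD ?uq_le.
rewrite powRD ?(gt_eqF s0) ?implybT// mulrACA.
by rewrite ler_wpM2r ?mulr_ge0 ?powR_ge0.
Qed.

End powR_bounds.

Lemma KFxT_0 {R : realType} (Psi : R -> R) : KFxT Psi -> Psi 0 = 0.
Proof.
case=> c1 [c2 [p1 [p2 [_ _ /andP[p10 _] p21 ->]]]].
by rewrite !powR0 ?mulr0 ?addr0 ?gt_eqF// (lt_trans ltr01).
Qed.

(* The one-sided first-order bound on [g] that the chain rule for DV needs: it
   follows from differentiability at [a], and at [a = 0] from [g z <= d * z]. *)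
Definition slope_le_on_nneg {R : realType} (g : R -> R) (a d : R) : Prop :=
  forall eta, 0 < eta ->
    \forall z \near a, 0 <= z -> g z - g a <= d * (z - a) + eta * `|z - a|.

Lemma is_derive_slope_le {R : realType} (g : R -> R) (a d : R) :
  is_derive a 1 g d -> slope_le_on_nneg g a d.
Proof.
move=> [dg <-] eta eta0.
have /eqaddoP/(_ eta eta0)/nbhs_ballP[del /= del0 small] := derivable_nbhs dg.
apply/nbhs_ballP; exists del => // z az _.
have := small (z - a); rewrite /ball/= sub0r normrN distrC => /(_ az).
rewrite !fctE -[(z - a)%:A]/((z - a) * 1) mulr1 subrK -[(z - a) *: _]/((z - a) * _).
move=> /(le_trans (ler_norm _)); rewrite opprD addrA mulrC distrC; lra.
Qed.

Lemma slope_le_at0 {R : realType} (g : R -> R) (C : R) : g 0 = 0 ->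
  (forall z, 0 <= z <= 1 -> g z <= C * z) -> slope_le_on_nneg g 0 C.
Proof.
move=> g0 gC eta eta0; apply/nbhs_ballP; exists 1 => [|z]; first exact: ltr01.
rewrite /ball/= sub0r normrN g0 !subr0 => z1 z0.
apply: le_trans (gC z _) _; first by rewrite z0 ltW// (le_lt_trans (ler_norm z)).
by rewrite lerDl mulr_ge0// ltW.
Qed.

Section dini_chain_rule.
Context {R : realType} {n : nat}.
Implicit Types (V : 'rV[R]_n -> R) (x v : 'rV[R]_n).

Lemma lipschitz_along_ray V x v : locally_lipschitz V ->
  exists2 B, 0 <= B & \forall h \near 0^'+, `|V (x + h *: v) - V x| <= B * h.
Proof.
move=> /(_ x) [d d0 [L VL]].
have xx : enorm (x - x) < d by rewrite subrr enorm0.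
exists (`|L| * enorm v); first by rewrite mulr_ge0 ?sqrtr_ge0.
have ev0 : 0 <= enorm v by exact: sqrtr_ge0.
near=> h.
have h0 : 0 < h by near: h; exact: nbhs_right_gt.
have hd : h < d / (enorm v + 1).
  by near: h; apply: nbhs_right_lt; rewrite divr_gt0// ltr_pwDr.
have ray : enorm (x + h *: v - x) = h * enorm v by rewrite addrC addKr enormZ gtr0_norm.
have : enorm (x + h *: v - x) < d.
  by rewrite ray; move: hd; rewrite ltr_pdivlMr ?ltr_pwDr//; nra.
move=> /VL /(_ xx); rewrite ray => /le_trans; apply.
rewrite mulrCA mulrC.
by apply/ler_wpM2r/ler_wpM2r; [exact: ltW|exact: ev0|exact: ler_norm].
Unshelve. all: by end_near. Qed.

Lemma DV_comp_le (g : R -> R) V x v (d y : R) : 0 <= d ->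
  locally_lipschitz V -> (forall w, 0 <= V w) -> slope_le_on_nneg g (V x) d ->
  (DV V x v <= y%:E)%E -> (DV (fun w => g (V w)) x v <= (d * y)%:E)%E.
Proof.
move=> d0 Vlip V0 gslope /limf_esup_leP Vy; apply/limf_esup_leP => e e0.
have [B B0 VB] := lipschitz_along_ray x v Vlip.
set e1 := e / (2 * (d + 1)); set eta := e / (2 * (B + 1)).
have e10 : 0 < e1 by rewrite divr_gt0// mulr_gt0// ltr_pwDr.
have eta0 : 0 < eta by rewrite divr_gt0// mulr_gt0// ltr_pwDr.
have de1 : d * e1 <= e / 2.
  by rewrite /e1 mulrA ler_pdivrMr ?mulr_gt0 ?ltr_pwDr//; nra.
have etaB : eta * B <= e / 2.
  by rewrite /eta mulrAC ler_pdivrMr ?mulr_gt0 ?ltr_pwDr//; nra.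
have /nbhs_ballP[del /= del0 gdel] := gslope eta eta0.
near=> h.
have h0 : 0 < h by near: h; exact: nbhs_right_gt.
have VBh : `|V (x + h *: v) - V x| <= B * h by near: h.
have qy : (V (x + h *: v) - V x) / h <= y + e1 by near: h; exact: Vy.
have Bdel : B * h < del.
  have hdel : h < del / (B + 1).
    by near: h; apply: nbhs_right_lt; rewrite divr_gt0// ltr_pwDr.
  by move: hdel; rewrite ltr_pdivlMr ?ltr_pwDr//; nra.
have := gdel (V (x + h *: v)) _ (V0 _).
rewrite /ball/= distrC => /(_ (le_lt_trans VBh Bdel)) gz.
move: qy; rewrite ler_pdivrMr// => zy.
rewrite ler_pdivrMr//.
have := ler_wpM2l d0 zy; have := ler_wpM2l (ltW eta0) VBh.
have := ler_wpM2r (ltW h0) de1; have := ler_wpM2r (ltW h0) etaB.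
lra.
Unshelve. all: by end_near. Qed.

End dini_chain_rule.

Lemma locally_lipschitz_comp {R : realType} {n : nat} (g : R -> R) (V : 'rV[R]_n -> R) :
  (forall K, exists2 L, 0 <= L & forall a b, 0 <= a <= K -> 0 <= b <= K ->
     `|g a - g b| <= L * `|a - b|) ->
  (forall w, 0 <= V w) -> locally_lipschitz V -> locally_lipschitz (fun w => g (V w)).
Proof.
move=> glip V0 Vlip x; have [d d0 [L VL]] := Vlip x.
have xx : enorm (x - x) < d by rewrite subrr enorm0.
have Vbd w : enorm (w - x) < d -> V w <= V x + `|L| * d.
  move=> wx; have := VL w x wx xx; have := ler_norm (V w - V x).
  have : L * enorm (w - x) <= `|L| * d.
    apply: le_trans (ler_wpM2r (sqrtr_ge0 _) (ler_norm L)) _.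
    by apply: ler_wpM2l; [exact: normr_ge0|exact: ltW].
  lra.
have [Lg Lg0 gL] := glip (V x + `|L| * d).
exists d => //; exists (Lg * L) => y z yx zx.
apply: le_trans (gL _ _ _ _) _; rewrite ?V0 ?Vbd//.
by rewrite -mulrA ler_wpM2l ?VL.
Qed.

Definition powsum {R : realType} {N : nat} (c r : 'I_N -> R) (s : R) : R :=
  \sum_(i < N) c i * s `^ r i.

Definition dpowsum {R : realType} {N : nat} (c r : 'I_N -> R) (s : R) : R :=
  \sum_(i < N) c i * (r i * s `^ (r i - 1)).

Definition dpowsum_div {R : realType} {N : nat} (c r : 'I_N -> R) (k s : R) : R :=
  \sum_(i < N) c i * (r i * s `^ (r i - k)).

Section powsum.
Context {R : realType} {N : nat} (c r : 'I_N -> R).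
Implicit Types s k K : R.

Lemma is_derive_powsum s : 0 < s -> is_derive s 1 (powsum c r) (dpowsum c r s).
Proof.
move=> s0; rewrite (_ : powsum c r = \sum_(i < N) (fun s => c i * s `^ r i)).
  by apply: is_derive_sum => i; exact: is_deriveZ (is_derive1_powR _ s0).
by rewrite fct_sumE.
Qed.

Lemma derivable_dpowsum s : 0 < s -> derivable (dpowsum c r) s 1.
Proof.
move=> s0.
rewrite (_ : dpowsum c r = \sum_(i < N) (fun s => c i * (r i * s `^ (r i - 1)))).
  apply: derivable_sum => i; apply: ex_derive.
  by apply: is_deriveZ; apply: is_deriveZ; exact: is_derive1_powR.
by rewrite fct_sumE.
Qed.

Lemma dpowsumE k s : 0 < s -> dpowsum c r s = s `^ (k - 1) * dpowsum_div c r k s.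
Proof.
move=> s0; rewrite mulr_sumr; apply: eq_bigr => i _.
rewrite [RHS]mulrCA; congr (_ * _); rewrite [RHS]mulrCA; congr (_ * _).
by rewrite -powRD ?(gt_eqF s0) ?implybT// addrCA addrAC subrr add0r.
Qed.

Hypothesis r_ge1 : forall i, 1 <= r i.

Lemma powsum0 : powsum c r 0 = 0.
Proof.
by rewrite /powsum big1// => i _; rewrite powR0 ?mulr0// gt_eqF// (lt_le_trans ltr01).
Qed.

Lemma norm_dpowsum_le K :
  exists2 L, 0 <= L & forall s, 0 < s <= K -> `|dpowsum c r s| <= L.
Proof.
have ri0 i : 0 <= r i by exact: le_trans ler01 (r_ge1 i).
exists (\sum_(i < N) `|c i| * (r i * K `^ (r i - 1))) => [|s /andP[s0 sK]].
  by rewrite sumr_ge0// => i _; rewrite !mulr_ge0 ?powR_ge0.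
apply: le_trans (ler_norm_sum _ _ _) _; apply: ler_sum => i _.
rewrite normrM ler_wpM2l// normrM (ger0_norm (ri0 i)) ger0_norm ?powR_ge0// ler_wpM2l//.
have K0 : 0 <= K by exact: le_trans (ltW s0) sK.
by apply: ge0_ler_powR; rewrite ?nnegrE ?subr_ge0 ?(ltW s0).
Qed.

Lemma powsum_lipschitz : {within `[0, +oo[, continuous powsum c r} ->
  forall K, exists2 L, 0 <= L & forall a b, 0 <= a <= K -> 0 <= b <= K ->
    `|powsum c r a - powsum c r b| <= L * `|a - b|.
Proof.
move=> sc K; have [L L0 dL] := norm_dpowsum_le K.
by exists L => //; apply: lipschitz_of_derive_bound sc is_derive_powsum dL.
Qed.

Hypothesis c_neq0 : forall i, c i != 0.
Hypothesis dpowsum_gt0 : forall s, 0 < s -> 0 < dpowsum c r s.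

Lemma dpowsum_div_cvg (F : set_system R) {FF : Filter F} j :
  (forall i, i != j -> s `^ (r i - r j) @[s --> F] --> 0) ->
  dpowsum_div c r (r j) s @[s --> F] --> c j * r j.
Proof.
move=> cvg_other; apply: cvg_sum_single => [|i /cvg_other].
  by under eq_fun do rewrite subrr powRr0 mulr1; exact: cvg_cst.
by move=> /(cvgMr (a := r i)) /(cvgMr (a := c i)); rewrite !mulr0.
Qed.

Lemma dpowsum_lb_near (F : set_system R) {FF : ProperFilter F} j :
  (forall i, i != j -> s `^ (r i - r j) @[s --> F] --> 0) ->
  (\forall s \near F, 0 < s) ->
  exists2 m, 0 < m & \forall s \near F, m * s `^ (r j - 1) <= dpowsum c r s.
Proof.
move=> cvg_other Fpos.
have lim_div : dpowsum_div c r (r j) s @[s --> F] --> c j * r j.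
  exact: dpowsum_div_cvg.
have div_gt0 : \forall s \near F, 0 < dpowsum_div c r (r j) s.
  apply: filterS Fpos => s s0.
  by have := dpowsum_gt0 s0; rewrite (dpowsumE (r j) s0) pmulr_rgt0 ?powR_gt0.
have lead_gt0 : 0 < c j * r j.
  rewrite lt_neqAle eq_sym mulf_neq0 ?c_neq0 ?gt_eqF ?(lt_le_trans ltr01)//=.
  rewrite -(cvg_lim _ lim_div)//; apply: limr_ge; first exact: cvgP lim_div.
  by apply: filterS div_gt0 => s /ltW.
exists (c j * r j / 2); first by rewrite divr_gt0.
near=> s; have s0 : 0 < s by near: s.
rewrite (dpowsumE (r j) s0) mulrC ler_wpM2l ?powR_ge0// ltW//.
by near: s; apply: cvgr_gt lim_div _ _; rewrite ltr_pdivrMr// ltr_pMr// ltr1n.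
Unshelve. all: by end_near. Qed.

Lemma dpowsum_lb_compact a b : 0 < a -> a <= b ->
  exists2 m, 0 < m & forall s, a <= s <= b -> m <= dpowsum c r s.
Proof.
move=> a0 ab.
have dc : {within `[a, b], continuous dpowsum c r}.
  apply: derivable_within_continuous => s /[!in_itv]/= /andP[sa _].
  exact/derivable_dpowsum/(lt_le_trans a0 sa).
have [s /[!in_itv]/= /andP[sa _] smin] := EVT_min ab dc.
exists (dpowsum c r s); first exact/dpowsum_gt0/(lt_le_trans a0 sa).
by move=> t tab; apply: smin; rewrite in_itv.
Qed.

End powsum.

Section sorted_exponents.
Context {R : realType} {N : nat} (c r : 'I_N.+1 -> R).
Implicit Types s : R.
Hypothesis r_incr : forall i j : 'I_N.+1, (i < j)%N -> r i < r j.

Lemma r_gt_first i : i != ord0 -> r ord0 < r i.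
Proof. by move=> i0; apply: r_incr; rewrite lt0n. Qed.

Lemma r_lt_last i : i != ord_max -> r i < r ord_max.
Proof.
by case: (unliftP ord_max i) => [j -> _|-> /eqP//]; apply: r_incr; rewrite lift_max.
Qed.

Lemma r_min i : r ord0 <= r i.
Proof. by have [->|/r_gt_first/ltW] := eqVneq i ord0. Qed.

Lemma r_max i : r i <= r ord_max.
Proof. by have [->|/r_lt_last/ltW] := eqVneq i ord_max. Qed.

Lemma powsum_le_le1 s : 0 < r ord0 -> 0 <= s <= 1 ->
  powsum c r s <= (\sum_i `|c i|) * s `^ r ord0.
Proof.
move=> r00 /andP[s0 s1]; rewrite mulr_suml; apply: ler_sum => i _.
apply: le_trans (ler_wpM2r (powR_ge0 _ _) (ler_norm _)) _; rewrite ler_wpM2l//.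
move: s0; rewrite le_eqVlt => /predU1P[<-|s0].
  by rewrite !powR0 ?gt_eqF// (lt_le_trans r00 (r_min i)).
by apply: ger_powR; rewrite ?s0 ?s1 ?r_min.
Qed.

Lemma powsum_le_linear s : 1 <= r ord0 -> 0 <= s <= 1 ->
  powsum c r s <= (\sum_i `|c i|) * s.
Proof.
move=> r01 s01; have r00 : 0 < r ord0 by exact: lt_le_trans ltr01 r01.
apply: le_trans (powsum_le_le1 r00 s01) _; rewrite ler_wpM2l ?sumr_ge0//.
case/andP: s01; rewrite le_eqVlt => /predU1P[<- _|s0 s1].
  by rewrite powR0 ?gt_eqF.
by apply: ge1r_powR; rewrite ?s0.
Qed.

Lemma powsum_le_ge1 s : 1 <= s -> powsum c r s <= (\sum_i `|c i|) * s `^ r ord_max.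
Proof.
move=> s1; rewrite mulr_suml; apply: ler_sum => i _.
apply: le_trans (ler_wpM2r (powR_ge0 _ _) (ler_norm _)) _.
by rewrite ler_wpM2l// ler_powR// r_max.
Qed.

Hypothesis r_ge1 : forall i, 1 <= r i.
Hypothesis c_neq0 : forall i, c i != 0.
Hypothesis dpowsum_gt0 : forall s, 0 < s -> 0 < dpowsum c r s.

Lemma dpowsum_lb_le1 : exists2 m, 0 < m &
  forall s, 0 < s <= 1 -> m * s `^ (r ord0 - 1) <= dpowsum c r s.
Proof.
have [m0 m00] : exists2 m, 0 < m &
    \forall s \near 0^'+, m * s `^ (r ord0 - 1) <= dpowsum c r s.
  apply: dpowsum_lb_near => // [i i0|]; last exact: nbhs_right_gt.
  by apply: powR_cvg0; rewrite subr_gt0 r_gt_first.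
rewrite near_withinE => /nbhs_ballP[d /= d0 near0].
set a := Num.min (d / 2) 1.
have a0 : 0 < a by rewrite lt_min ltr01 divr_gt0.
have ad : a < d by apply: le_lt_trans (_ : d / 2 < d); rewrite ?ge_min ?lexx//; lra.
have a1 : a <= 1 by rewrite ge_min lexx orbT.
have [m1 m10 mid] := dpowsum_lb_compact dpowsum_gt0 a0 a1.
exists (Num.min m0 m1) => [|s /andP[s0 s1]]; first by rewrite lt_min m00.
have m_ge0 : 0 <= Num.min m0 m1 by rewrite le_min ltW// ltW.
have [sa|sa] := ltP s a.
  apply: le_trans (near0 s _ s0); last first.
    by rewrite /ball/= sub0r normrN gtr0_norm// (lt_trans sa).
  by rewrite ler_wpM2r ?powR_ge0// ge_min lexx.
have pow_le1 : s `^ (r ord0 - 1) <= 1.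
  by rewrite -[leRHS](powRr0 s) ger_powR ?s0 ?s1// subr_ge0 r_ge1.
apply: le_trans (mid s _); last by rewrite sa s1.
by rewrite -[leRHS]mulr1 ler_pM ?powR_ge0// ge_min lexx orbT.
Qed.

Lemma dpowsum_lb_ge1 : exists2 m, 0 < m &
  forall s, 1 <= s -> m * s `^ (r ord_max - 1) <= dpowsum c r s.
Proof.
have [m0 m00 [M [_ nearoo]]] : exists2 m, 0 < m &
    \forall s \near +oo, m * s `^ (r ord_max - 1) <= dpowsum c r s.
  apply: dpowsum_lb_near => // [i imax|]; last by apply: nbhs_pinfty_gt; exact: num_real.
  by apply: powR_cvgy0; rewrite subr_lt0 r_lt_last.
set b := Num.max (M + 1) 1.
have b1 : 1 <= b by rewrite le_max lexx orbT.
have [m1 m10 mid] := dpowsum_lb_compact dpowsum_gt0 ltr01 b1.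
set B := b `^ (r ord_max - 1).
have B0 : 0 < B by rewrite powR_gt0// (lt_le_trans ltr01).
exists (Num.min m0 (m1 / B)) => [|s s1]; first by rewrite lt_min m00 divr_gt0.
have m_ge0 : 0 <= Num.min m0 (m1 / B) by rewrite le_min !ltW// divr_gt0.
have [sb|bs] := leP s b; last first.
  apply: le_trans (nearoo s _); first by rewrite ler_wpM2r ?powR_ge0// ge_min lexx.
  by apply: lt_trans bs; rewrite lt_max ltrDl ltr01.
have pow_leB : s `^ (r ord_max - 1) <= B.
  by apply: ge0_ler_powR; rewrite ?nnegrE ?subr_ge0 ?r_ge1 ?(le_trans ler01).
apply: le_trans (mid s _); last by rewrite s1 sb.
by rewrite -[leRHS](divfK (lt0r_neq0 B0)) ler_pM ?powR_ge0// ge_min lexx orbT.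
Qed.

Lemma KFxT_powsum Psi : (forall s, 0 <= s -> 0 <= powsum c r s) ->
  KFxT Psi -> exists2 Psi' : R -> R, KFxT Psi' &
  forall s, 0 < s -> Psi' (powsum c r s) <= dpowsum c r s * Psi s.
Proof.
move=> powsum_ge0 [a1 [a2 [p1 [p2 [a10 a20 /andP[p10 p11] p21 PsiE]]]]].
have [m1 m10 lb1] := dpowsum_lb_le1.
have [m2 m20 lb2] := dpowsum_lb_ge1.
set r1 := r ord0 in lb1 *; set r2 := r ord_max in lb2 *.
have r1_ge1 : 1 <= r1 := r_ge1 _; have r2_ge1 : 1 <= r2 := r_ge1 _.
set C : R := \sum_i `|c i| + 1.
have C0 : 0 < C by rewrite ltr_pwDr ?sumr_ge0.
set q1 := (r1 - 1 + p1) / r1; set q2 := (r2 - 1 + p2) / r2.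
have r1q1 : r1 * q1 = r1 - 1 + p1 by rewrite mulrC divfK ?gt_eqF//; lra.
have r2q2 : r2 * q2 = r2 - 1 + p2 by rewrite mulrC divfK ?gt_eqF//; lra.
have q10 : 0 < q1 by rewrite divr_gt0//; lra.
have q11 : q1 < 1 by rewrite ltr_pdivrMr ?mul1r//; lra.
have q21 : 1 < q2 by rewrite ltr_pdivlMr ?mul1r//; lra.
set K := C `^ q1 + C `^ q2.
set b := Num.min (m1 * a1 / K) (m2 * a2 / K).
have b0 : 0 < b by rewrite lt_min !divr_gt0 ?mulr_gt0 ?addr_gt0 ?powR_gt0.
exists (fun t => b * t `^ q1 + b * t `^ q2).
  by exists b, b, q1, q2; split; rewrite ?q10.
move=> s s0; rewrite -mulrDr PsiE.
have u0 := powsum_ge0 _ (ltW s0).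
have b_le (b' : R) : b <= b' -> b * (powsum c r s `^ q1 + powsum c r s `^ q2) <=
    b' * (powsum c r s `^ q1 + powsum c r s `^ q2).
  by move=> bb'; rewrite ler_wpM2r ?addr_ge0 ?powR_ge0.
have q20 : 0 <= q2 by rewrite ltW// (lt_trans ltr01).
have [s1|s1] := leP s 1.
- apply: le_trans (b_le (m1 * a1 / K) _) _; first by rewrite ge_min lexx.
  apply: le_trans (_ : _ <= dpowsum c r s * (a1 * s `^ p1)) _; last first.
    by rewrite ler_wpM2l ?(ltW (dpowsum_gt0 s0))// lerDl mulr_ge0 ?powR_ge0 ?ltW.
  apply: (@powR_sum_le_regime _ _ _ s C m1 a1 r1);
    rewrite ?(ltW q10) ?(ltW m10) ?(ltW a10)//.
  + rewrite u0/=; apply: le_trans (powsum_le_le1 (lt_le_trans ltr01 r1_ge1) _) _.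
      by rewrite (ltW s0) s1.
    by rewrite ler_wpM2r ?powR_ge0 ?lerDl.
  + by rewrite r1q1.
  + by apply: ger_powR; rewrite ?s0// -r1q1 ler_wpM2l; lra.
  + by rewrite lb1 ?s0.
- apply: le_trans (b_le (m2 * a2 / K) _) _; first by rewrite ge_min lexx orbT.
  apply: le_trans (_ : _ <= dpowsum c r s * (a2 * s `^ p2)) _; last first.
    by rewrite ler_wpM2l ?(ltW (dpowsum_gt0 s0))// lerDr mulr_ge0 ?powR_ge0 ?ltW.
  apply: (@powR_sum_le_regime _ _ _ s C m2 a2 r2);
    rewrite ?(ltW q10) ?(ltW m20) ?(ltW a20)//.
  + rewrite u0/=; apply: le_trans (powsum_le_ge1 (ltW s1)) _.
    by rewrite ler_wpM2r ?powR_ge0 ?lerDl.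
  + by apply: ler_powR; rewrite ?(ltW s1)// -r2q2 ler_wpM2l; lra.
  + by rewrite r2q2.
  + by rewrite lb2 ?ltW.
Qed.

Lemma DV_powsum_comp_le {n : nat} (V : 'rV[R]_n -> R) (x v : 'rV[R]_n)
    (Psi Psi' : R -> R) :
  locally_lipschitz V -> (forall w, 0 <= V w) -> Psi 0 = 0 -> Psi' 0 = 0 ->
  (forall s, 0 < s -> Psi' (powsum c r s) <= dpowsum c r s * Psi s) ->
  (DV V x v <= (- Psi (V x))%:E)%E ->
  (DV (fun w => powsum c r (V w)) x v <= (- Psi' (powsum c r (V x)))%:E)%E.
Proof.
move=> Vlip V0 Psi0 Psi'0 Psi'_le DV_le.
have sig0 := powsum0 c r_ge1.
have := V0 x; rewrite le_eqVlt => /predU1P[Vx0|Vx_gt0].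
  rewrite -Vx0 Psi0 oppr0 in DV_le; rewrite -Vx0 sig0 Psi'0 oppr0.
  rewrite -(mulr0 (\sum_i `|c i|)); apply: DV_comp_le Vlip V0 _ DV_le.
    exact: sumr_ge0.
  rewrite -Vx0; apply: slope_le_at0 sig0 _ => z; exact: powsum_le_linear.
apply: le_trans (DV_comp_le (d := dpowsum c r (V x)) _ Vlip V0 _ DV_le) _.
- exact/ltW/dpowsum_gt0.
- exact: is_derive_slope_le (is_derive_powsum c r Vx_gt0).
by rewrite lee_fin mulrN lerN2 Psi'_le.
Qed.

End sorted_exponents.

Theorem lemma7 (R : realType) (n m : nat)
  (f : 'rV[R]_n -> 'rV[R]_m -> 'rV[R]_n) (V : 'rV[R]_n -> R)
  (N : nat) (c r : 'I_N -> R) :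
  continuous (fun p : 'rV[R]_n * 'rV[R]_m => f p.1 p.2) ->
  f 0 0 = 0 ->
  FxT_ISS_Lyapunov f V ->
  (forall i : 'I_N, 1 <= r i) ->
  (forall i j : 'I_N, (i < j)%N -> r i < r j) ->
  (forall i : 'I_N, c i != 0) ->
  let sigma := fun s : R => \sum_(i < N) c i * s `^ r i in
  Kinf sigma ->
  (forall s : R, 0 < s -> 0 < derive1 sigma s) ->
  FxT_ISS_Lyapunov f (fun x => sigma (V x)).
Proof.
move=> _ _ [Vlip [V0 [al [au [chi [Psi [[Kal Kau Kchi KPsi Vbnd] V_decr]]]]]]].
case: N c r => [|N] c r r_ge1 r_incr c_neq0 sigma Ksig dsig_gt0.
  by case: Ksig => _ _ _ /(_ 0) [s [_]]; rewrite /sigma big_ord0 ltxx.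
have Kpowsum : Kinf (powsum c r) := Ksig.
have dpowsum_gt0 s : 0 < s -> 0 < dpowsum c r s.
  move=> s0; have := dsig_gt0 s s0; have ds := is_derive_powsum c r s0.
  by rewrite derive1E derive_val.
have [Psi' KPsi' Psi'_le] := KFxT_powsum r_incr r_ge1 c_neq0 dpowsum_gt0
  (fun s s0 => Kinf_ge0 Kpowsum s0) KPsi.
have [_ powsum_cont _ _] := Kpowsum.
change (FxT_ISS_Lyapunov f (fun x => powsum c r (V x))).
split; first exact: locally_lipschitz_comp (powsum_lipschitz r_ge1 powsum_cont) V0 Vlip.
split=> [x|]; first exact: Kinf_ge0.
exists (powsum c r \o al), (powsum c r \o au), (powsum c r \o chi), Psi'.
split.
  split=> [||||x]; [exact: Kinf_comp Kpowsum _ ..|exact: KPsi'|].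
  have Vx0 := V0 x; have al0 := Kinf_ge0 Kal (enorm_ge0 x).
  have au0 := Kinf_ge0 Kau (enorm_ge0 x).
  by rewrite /= !(Kinf_ler Kpowsum)//; exact: Vbnd.
move=> x u; have Vx0 := V0 x; have chi0 := Kinf_ge0 Kchi (enorm_ge0 u).
rewrite /= (Kinf_ler Kpowsum)// => /V_decr DV_le.
exact: (DV_powsum_comp_le r_incr r_ge1 dpowsum_gt0 Vlip V0
  (KFxT_0 KPsi) (KFxT_0 KPsi') Psi'_le DV_le).
Qed.
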